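(* Let $v_1,v_2$ be two vertices of $\mathscr{BG}_+(n)$ with associated collections $\mathscr{D}_1,\mathscr{D}_2$, such that $\bigcap\mathscr{D}_1=\{i\}=\bigcap\mathscr{D}_2$ for some $i\in N$. Then $v_1$ and $v_2$ are adjacent if and only if either $\mathscr{D}_1\subseteq\mathscr{D}_2$ or $\mathscr{D}_2\subseteq\mathscr{D}_1$, and $|\mathscr{D}_1\,\Delta\,\mathscr{D}_2|=1$.
   Context: $N=\{1,\ldots,n\}$; a game is a map $v:2^N\to\mathbb{R}$ with $v(\varnothing)=0$. $\mathscr{BG}_+(n)$ is the polytope (in $\mathbb{R}^{2^N\setminus\{\varnothing,N\}}$) of games with $v\geqslant0$, $v(N)=1$ and nonempty core $C(v)=\{x\in\mathbb{R}^N:\sum_{i\in S}x_i\geqslant v(S)\ \forall S,\ \sum_{i\in N}x_i=v(N)\}$. The collection associated to a vertex $v$ is $\mathscr{D}=\{S:\varnothing\neq S\subsetneq N,\ v(S)=1\}$, and $\bigcap\mathscr{D}$ denotes the intersection of its members. Two vertices are adjacent if they lie on a common edge of the polytope. $\Delta$ is symmetric difference. *)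

From HB Require Import structures.
From mathcomp Require Import all_boot all_order all_algebra.
Set Implicit Arguments. Unset Strict Implicit. Unset Printing Implicit Defensive.
Import Order.TTheory GRing.Theory Num.Theory.
Local Open Scope ring_scope.

(* A game on N = 'I_n : a function on subsets of N (value on set0 must be 0). *)
Definition game (R : realFieldType) (n : nat) := {ffun {set 'I_n} -> R}.

Definition in_core (R : realFieldType) (n : nat) (v : game R n) (x : 'I_n -> R) :=
  (forall S : {set 'I_n}, v S <= \sum_(i in S) x i) /\ \sum_(i : 'I_n) x i = v setT.

Definition core_nonempty (R : realFieldType) (n : nat) (v : game R n) :=
  exists x : 'I_n -> R, in_core v x.

(* The polytope BG_+(n). Coordinates on set0 and setT are fixed (0 and 1),
   so the polytope is identified with its image in R^{2^N \ {set0, N}}. *)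
Definition BGplus (R : realFieldType) (n : nat) (v : game R n) : Prop :=
  v set0 = 0 /\ v setT = 1 /\ (forall S, 0 <= v S) /\ core_nonempty v.

Definition lin (R : realFieldType) (n : nat) (c v : game R n) : R :=
  \sum_(S : {set 'I_n}) c S * v S.

Definition is_face (R : realFieldType) (n : nat) (F : game R n -> Prop) : Prop :=
  exists c : game R n,
    forall x, F x <-> (BGplus x /\ forall y, BGplus y -> lin c y <= lin c x).

Definition is_vertex (R : realFieldType) (n : nat) (v : game R n) : Prop :=
  is_face (fun x => x = v).

Definition segment (R : realFieldType) (n : nat) (v1 v2 : game R n) (x : game R n) : Prop :=
  exists2 t : R, 0 <= t <= 1 & x = [ffun S => (1 - t) * v1 S + t * v2 S].

Definition adjacent (R : realFieldType) (n : nat) (v1 v2 : game R n) : Prop :=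
  v1 <> v2 /\ is_face (segment v1 v2).

Definition coll (R : realFieldType) (n : nat) (v : game R n) : {set {set 'I_n}} :=
  [set S : {set 'I_n} | (S != set0) && (S != setT) && (v S == 1)].

Definition bigcap_coll (n : nat) (D : {set {set 'I_n}}) : {set 'I_n} :=
  \bigcap_(S in D) S.

Definition symdiff (T : finType) (A B : {set T}) : {set T} := (A :\: B) :|: (B :\: A).

From mathcomp Require Import all_boot all_order all_algebra.
From mathcomp Require Import ring lra.
Set Implicit Arguments. Unset Strict Implicit. Unset Printing Implicit Defensive.
Import Order.TTheory GRing.Theory Num.Theory.
Local Open Scope ring_scope.

(* Every vertex of BG_+(n) is 0/1-valued: for a core vector x of v, the
   functional c satisfies c.v <= c(N) + sum_(S <> N) max(c(S), 0) x(S), which is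
   linear in x over the simplex, hence at most c(N) + the largest "gain" of a
   single player j; the game equal to 1 on N and on the coalitions S containing j
   with c(S) > 0 attains this bound.
   If every member of D1 and D2 contains i, then i is a veto player of v1 and v2,
   so every game lying coordinatewise between v1 and v2 has the unit vector e_i
   in its core and belongs to BG_+(n).  If [v1, v2] is an edge, maximising c, and
   v1, v2 differ at two coalitions A <> B, exchanging their values at A gives two
   such games whose c-values add up to twice the maximum; both are then
   maximisers, but neither lies on the segment.  Conversely, if they differ only
   at A, the segment is the face maximising sum_(S <> A) (2 v1(S) - 1) v(S).
   Finally |D1 Δ D2| = 1 already forces D1 and D2 to be comparable. *)

Section Games.
Variables (R : realFieldType) (n : nat).
Implicit Types (v w y : game R n) (c : game R n) (S A B : {set 'I_n}).

Lemma sum_indicator (T : finType) (P : {pred T}) j :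
  \sum_(k in P) ((k == j)%:R : R) = (j \in P)%:R.
Proof.
have [jP | /negbTE jP] := boolP (j \in P); last first.
  by rewrite big1 // => k kP; case: eqP => // kj; rewrite -kj kP in jP.
by rewrite (bigD1 j) //= eqxx big1 ?addr0 // => k /andP[_ /negbTE ->].
Qed.

Definition veto_player v (i : 'I_n) := forall S, i \notin S -> v S = 0.

Lemma in_core_ge0 v x : (forall S, 0 <= v S) -> in_core v x -> forall k, 0 <= x k.
Proof.
move=> v_ge0 [x_core _] k.
by apply: le_trans (v_ge0 [set k]) _; have := x_core [set k]; rewrite big_set1.
Qed.

Lemma BGplus_le1 v S : BGplus v -> 0 <= v S <= 1.
Proof.
move=> [_ [vT [v_ge0 [x x_core]]]]; rewrite v_ge0 /=.
have x_ge0 := in_core_ge0 v_ge0 x_core.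
case: x_core => x_core x_sum; apply: le_trans (x_core S) _.
by rewrite -vT -x_sum [leRHS](bigID (mem S)) /= lerDl sumr_ge0.
Qed.

Lemma BGplus_veto v i :
  v setT = 1 -> (forall S, 0 <= v S <= 1) -> veto_player v i -> BGplus v.
Proof.
move=> vT v01 vi; split; first by apply: vi; rewrite inE.
split=> //; split=> [S|]; first by case/andP: (v01 S).
exists (fun k => (k == i)%:R); split=> [S|]; last first.
  by rewrite vT; exact: (sum_indicator predT i).
rewrite sum_indicator; have [iS | /vi -> //] := boolP (i \in S).
by case/andP: (v01 S).
Qed.

Lemma convex_between (a b t : R) :
  0 <= t <= 1 -> Num.min a b <= (1 - t) * a + t * b <= Num.max a b.
Proof.
move=> /andP[t0 t1]; rewrite ge_min le_max.
by case: (leP a b) => ab; apply/andP; split; apply/orP; [left|right|right|left]; nra.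
Qed.

Lemma BGplus_between v1 v2 w i :
  BGplus v1 -> BGplus v2 -> veto_player v1 i -> veto_player v2 i ->
  (forall S, Num.min (v1 S) (v2 S) <= w S <= Num.max (v1 S) (v2 S)) -> BGplus w.
Proof.
move=> B1 B2 vi1 vi2 w_between; apply: (@BGplus_veto _ i).
- have := w_between setT; case: B1 => _ [-> _]; case: B2 => _ [-> _].
  by rewrite minxx maxxx -eq_le => /eqP.
- move=> S; have /andP[w_ge w_le] := w_between S.
  have /andP[v1_ge0 v1_le1] := BGplus_le1 S B1.
  have /andP[v2_ge0 v2_le1] := BGplus_le1 S B2.
  apply/andP; split; [apply: le_trans w_ge | apply: le_trans w_le _].
    by rewrite le_min v1_ge0.
  by rewrite ge_max v1_le1.
- move=> S iS; have := w_between S; rewrite (vi1 _ iS) (vi2 _ iS) minxx maxxx.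
  by rewrite -eq_le => /eqP.
Qed.

Definition patch v w A : game R n := [ffun S => if S == A then w S else v S].

Lemma patch_between v w A S :
  Num.min (v S) (w S) <= patch v w A S <= Num.max (v S) (w S).
Proof. by rewrite ffunE ge_min le_max; case: eqP; rewrite !lexx ?orbT. Qed.

Lemma lin_patch c v w A :
  lin c (patch v w A) + lin c (patch w v A) = lin c v + lin c w.
Proof.
rewrite /lin -!big_split; apply: eq_bigr => S _; rewrite !ffunE /=.
by case: eqP => _ //; rewrite addrC.
Qed.

Lemma segment_left v1 v2 : segment v1 v2 v1.
Proof.
exists 0; first by rewrite lexx ler01.
by apply/ffunP => S; rewrite ffunE subr0 mul1r mul0r addr0.
Qed.

Lemma segment_right v1 v2 : segment v1 v2 v2.
Proof.
exists 1; first by rewrite lexx ler01.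
by apply/ffunP => S; rewrite ffunE subrr mul0r mul1r add0r.
Qed.

Lemma edge_differs_once v1 v2 i A B :
  BGplus v1 -> BGplus v2 -> veto_player v1 i -> veto_player v2 i ->
  is_face (segment v1 v2) -> v1 A != v2 A -> v1 B != v2 B -> A = B.
Proof.
move=> B1 B2 vi1 vi2 [c face] neqA neqB; apply/eqP/negPn/negP => neqAB.
have [_ max1] := (face v1).1 (segment_left v1 v2).
have [_ max2] := (face v2).1 (segment_right v1 v2).
have Bw1 : BGplus (patch v1 v2 A).
  by apply: (BGplus_between B1 B2 vi1 vi2) => S; apply: patch_between.
have Bw2 : BGplus (patch v2 v1 A).
  apply: (BGplus_between B1 B2 vi1 vi2) => S.
  by rewrite minC maxC; apply: patch_between.
have max_w1 y : BGplus y -> lin c y <= lin c (patch v1 v2 A).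
  move=> By; have := lin_patch c v1 v2 A.
  have := max1 _ Bw2; have := max2 _ B1; have := max1 _ By; lra.
have [t _ w1E] := (face _).2 (conj Bw1 max_w1).
have := congr1 (fun f : game R n => f B) w1E.
have := congr1 (fun f : game R n => f A) w1E.
rewrite !ffunE eqxx eq_sym (negbTE neqAB) => wA wB.
have /eqP : (1 - t) * (v2 A - v1 A) = 0 by lra.
have /eqP : t * (v2 B - v1 B) = 0 by lra.
rewrite !mulf_eq0 !subr_eq0 ![v2 _ == _]eq_sym (negbTE neqA) (negbTE neqB) !orbF.
by move=> /eqP ->; rewrite oner_eq0.
Qed.

Lemma leif_unit_interval (a y : R) : a = 0 \/ a = 1 -> 0 <= y <= 1 ->
  (2 * a - 1) * y <= (2 * a - 1) * a ?= iff (y == a).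
Proof.
move=> a01 /andP[y0 y1]; apply/leifP.
have [-> | /lt_total /orP[] ya] := eqVneq y a; first by rewrite eqxx.
  by case: a01 => a01; rewrite a01 in ya *; lra.
by case: a01 => a01; rewrite a01 in ya *; lra.
Qed.

Lemma is_face_ext (F G : game R n -> Prop) :
  (forall x, F x <-> G x) -> is_face F -> is_face G.
Proof. by move=> FG [c face]; exists c => x; rewrite -FG. Qed.

Lemma is_face_agree_off v A : BGplus v -> (forall S, v S = 0 \/ v S = 1) ->
  is_face (fun y => BGplus y /\ forall S, S != A -> y S = v S).
Proof.
move=> Bv v01.
pose c : game R n := [ffun S => if S == A then 0 else 2 * v S - 1].
have lin_leif y : BGplus y ->
    lin c y <= lin c v ?= iff [forall S, (S == A) || (y S == v S)].
  move=> By; apply: (leif_sum (P := predT)) => S _; rewrite ffunE.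
  case: eqP => _; first by rewrite !mul0r; apply/leif_refl.
  exact: leif_unit_interval (v01 S) (BGplus_le1 S By).
exists c => y; split.
- case=> By agree; split=> // z Bz; rewrite (eqTleif (lin_leif y By)).
    exact: (lin_leif z Bz).
  by apply/forallP => S; case: eqP => //= /eqP /agree ->.
- case=> By y_max; split=> // S SA.
  have := y_max v Bv; rewrite (ge_leif (lin_leif y By)) => /forallP/(_ S).
  by rewrite (negbTE SA) => /eqP.
Qed.

Lemma segment_agree_off v1 v2 i A :
  BGplus v1 -> BGplus v2 -> veto_player v1 i -> veto_player v2 i ->
  (forall S, v1 S = 0 \/ v1 S = 1) -> (forall S, v2 S = 0 \/ v2 S = 1) ->
  v1 A != v2 A -> (forall S, S != A -> v1 S = v2 S) ->
  forall y, segment v1 v2 y <-> BGplus y /\ forall S, S != A -> y S = v1 S.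
Proof.
move=> B1 B2 vi1 vi2 v01_1 v01_2 neqA agree y; split.
  case=> t t01 ->; split=> [|S SA].
    by apply: (BGplus_between B1 B2 vi1 vi2) => S; rewrite ffunE convex_between.
  by rewrite ffunE -agree //; ring.
case=> By yE; have /andP[yA0 yA1] := BGplus_le1 A By.
have yS t S : S != A -> y S = (1 - t) * v1 S + t * v2 S.
  by move=> SA; rewrite yE // -agree //; ring.
have [[v1A v2A] | [v1A v2A]] : (v1 A = 0 /\ v2 A = 1) \/ (v1 A = 1 /\ v2 A = 0).
- by case: (v01_1 A) (v01_2 A) neqA => -> [] ->; rewrite ?eqxx; auto.
- exists (y A); first by rewrite yA0.
  apply/ffunP => S; rewrite ffunE; have [-> | /yS //] := eqVneq S A.
  by rewrite v1A v2A; ring.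
- exists (1 - y A); first by apply/andP; split; lra.
  apply/ffunP => S; rewrite ffunE; have [-> | /yS //] := eqVneq S A.
  by rewrite v1A v2A; ring.
Qed.

Lemma exchange_sum_in (T : finType) (P : pred {set T}) (m : {set T} -> R) (x : T -> R) :
  \sum_(S | P S) m S * \sum_(k in S) x k =
  \sum_k x k * \sum_(S | P S && (k \in S)) m S.
Proof.
under eq_bigr => S _ do rewrite big_distrr big_mkcond /=.
rewrite exchange_big /=; apply: eq_bigr => k _.
rewrite big_distrr /= [RHS]big_mkcondr /=; apply: eq_bigr => S _.
by case: (k \in S); rewrite ?mulr0 // mulrC.
Qed.

Section GreedyVertex.
Variable c : game R n.

Definition gain (j : 'I_n) : R :=
  \sum_(S | (S != setT) && (j \in S)) Num.max (c S) 0.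

Definition greedy_game (j : 'I_n) : game R n :=
  [ffun S => ((S == setT) || (j \in S) && (0 < c S))%:R].

Lemma lin_le_gain y j :
  (forall k, gain k <= gain j) -> BGplus y -> lin c y <= c setT + gain j.
Proof.
move=> j_max By; have y01 S := BGplus_le1 S By.
case: By => _ [yT [y_ge0 [x x_core]]]; have x_ge0 := in_core_ge0 y_ge0 x_core.
case: x_core => x_core x_sum.
rewrite /lin (bigD1 setT) //= yT mulr1 lerD2l.
apply: (@le_trans _ _ (\sum_(S | S != setT) Num.max (c S) 0 * \sum_(k in S) x k)).
  apply: ler_sum => S _; apply: (@le_trans _ _ (Num.max (c S) 0 * y S)).
    by rewrite ler_wpM2r ?le_max ?lexx //; case/andP: (y01 S).
  by rewrite ler_wpM2l ?le_max ?lexx ?orbT.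
rewrite exchange_sum_in -[leRHS]mul1r -yT -x_sum big_distrl /=.
apply: ler_sum => k _; rewrite ler_wpM2l //; exact: j_max.
Qed.

Lemma BGplus_greedy_game j : BGplus (greedy_game j).
Proof.
apply: (@BGplus_veto _ j); first by rewrite ffunE eqxx.
  by move=> S; rewrite ffunE; case: (_ || _); rewrite ?lexx ?ler01.
move=> S jS; rewrite ffunE (negbTE jS) orbF.
by case: eqP => // ST; rewrite ST inE in jS.
Qed.

Lemma lin_greedy_game j : lin c (greedy_game j) = c setT + gain j.
Proof.
rewrite /lin (bigD1 setT) //= ffunE eqxx mulr1; congr (_ + _).
rewrite /gain big_mkcondr /=; apply: eq_bigr => S /negbTE ST.
rewrite ffunE ST /=; case: (j \in S) => /=; last by rewrite mulr0.
by case: ltP; rewrite ?mulr1 ?mulr0.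
Qed.

End GreedyVertex.

Lemma vertex_BGplus v : is_vertex v -> BGplus v.
Proof. by case=> c /(_ v) [/(_ erefl) []]. Qed.

Lemma vertex_01 v : is_vertex v -> forall S, v S = 0 \/ v S = 1.
Proof.
move=> V; have [c vertex] := V; have [v0 [vT _]] := vertex_BGplus V.
have [j0 _] : exists j : 'I_n, j \in setT.
  apply/set0Pn/eqP => T0; move: vT; rewrite T0 v0 => /eqP.
  by rewrite eq_sym oner_eq0.
pose j := [arg max_(j > j0) gain c j]%O.
have j_max k : gain c k <= gain c j by rewrite /j; case: arg_maxP => // ? _; apply.
have <- : greedy_game c j = v.
  apply/(vertex _).2; split=> [|y By]; first exact: BGplus_greedy_game.
  by rewrite lin_greedy_game; apply: lin_le_gain.
by move=> S; rewrite ffunE; case: (_ || _); [right | left].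
Qed.

Lemma vertexE v : is_vertex v -> forall S, v S = ((S == setT) || (S \in coll v))%:R.
Proof.
move=> V S; have [v0 [vT _]] := vertex_BGplus V.
have [-> // | ST] := eqVneq S setT; rewrite /coll inE ST andbT /=.
have [-> // | S0] := eqVneq S set0.
by case: (vertex_01 V S) => ->; rewrite ?eqxx // eq_sym oner_eq0.
Qed.

Lemma vertex_veto v i :
  is_vertex v -> bigcap_coll (coll v) = [set i] -> veto_player v i.
Proof.
move=> V capi S iS; rewrite (vertexE V).
have /negbTE -> : S != setT by apply: contraNneq iS => ->; rewrite inE.
have /negbTE -> // : S \notin coll v.
apply: contra iS => SD; have : i \in bigcap_coll (coll v) by rewrite capi set11.
by move/bigcapP; apply.
Qed.

Lemma vertex_neq_symdiff v1 v2 S : is_vertex v1 -> is_vertex v2 ->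
  (v1 S != v2 S) = (S \in symdiff (coll v1) (coll v2)).
Proof.
move=> V1 V2; rewrite (vertexE V1) (vertexE V2) /symdiff in_setU !in_setD.
have [-> | _] := eqVneq S setT; first by rewrite /coll !inE eqxx /= !andbF /= eqxx.
by rewrite /= eqr_nat; case: (S \in coll v1); case: (S \in coll v2).
Qed.

End Games.

Lemma symdiff_card_le1 (T : finType) (A B : {set T}) :
  (#|symdiff A B| <= 1)%N -> (A \subset B) || (B \subset A).
Proof.
move=> /card_le1_eqP sd1; apply/negPn/negP.
rewrite negb_or => /andP[/subsetPn[a aA aB] /subsetPn[b bB bA]].
have ab : a = b by apply: sd1; rewrite !inE ?aA ?aB ?bA ?bB.
by rewrite ab bB in aB.
Qed.

Theorem theorem13 (R : realFieldType) (n : nat) (v1 v2 : game R n) (i : 'I_n) :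
  is_vertex v1 -> is_vertex v2 ->
  bigcap_coll (coll v1) = [set i] -> bigcap_coll (coll v2) = [set i] ->
  (adjacent v1 v2 <->
     ((coll v1 \subset coll v2) || (coll v2 \subset coll v1)) /\
     #|symdiff (coll v1) (coll v2)| = 1%N).
Proof.
move=> V1 V2 cap1 cap2.
have [B1 B2] := (vertex_BGplus V1, vertex_BGplus V2).
have [vi1 vi2] := (vertex_veto V1 cap1, vertex_veto V2 cap2).
have neqE S := vertex_neq_symdiff S V1 V2.
split=> [[neq edge] | [_ /eqP/cards1P[A sdA]]].
  have sd_le1 : (#|symdiff (coll v1) (coll v2)| <= 1)%N.
    apply/card_le1_eqP => A B; rewrite -!neqE => neqA neqB.
    exact: edge_differs_once B1 B2 vi1 vi2 edge neqB neqA.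
  split; first exact: symdiff_card_le1.
  apply/eqP; rewrite eqn_leq sd_le1 card_gt0 /=.
  apply: contra_notN neq => /eqP sd0; apply/ffunP => S.
  by apply/eqP; rewrite -[_ == _]negbK neqE sd0 inE.
have agree S : S != A -> v1 S = v2 S.
  by move=> SA; apply/eqP; rewrite -[_ == _]negbK neqE sdA inE.
have neqA : v1 A != v2 A by rewrite neqE sdA set11.
split=> [v12 | ]; first by rewrite v12 eqxx in neqA.
apply: is_face_ext (is_face_agree_off A B1 (vertex_01 V1)) => y.
apply: iff_sym.
exact: segment_agree_off B1 B2 vi1 vi2 (vertex_01 V1) (vertex_01 V2) neqA agree y.
Qed.
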